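(* Assume the standing setting of the context. Let $(\varepsilon_k)_k$ be a positive sequence with $\varepsilon_k\to0$ and let $x^*(\varepsilon_k)$ be the unique Nash equilibrium of NEP($\varepsilon_k$). Then every accumulation point of $(x^*(\varepsilon_k))_k$ is a Nash equilibrium of the nonsmooth NEP, and therefore of the multi-leader-follower game.
   Context: Standing setting: $N\ge1$, $x=(x_1,\dots,x_N)\in\mathbb{R}^n$, $x_\nu\in\mathbb{R}^{n_\nu}$, $x_{-\nu}$ = all components other than $x_\nu$. For each $\nu$: $Q_\nu$ symmetric positive definite, $c_\nu\in\mathbb{R}^{n_\nu}$, $X_\nu=\{x_\nu:g_\nu(x_\nu)\le0\}$ nonempty, convex, closed with $g_\nu$ convex and at least twice differentiable; $X=X_1\times\dots\times X_N$; $a\in\mathbb{R}^m$, $a\ge0$; $Q_y\in\mathbb{R}^{m\times m}$ positive definite diagonal; $B,L\in\mathbb{R}^{n\times m}$. For $\varepsilon>0$, $\tilde\phi_\varepsilon:\mathbb{R}\to\mathbb{R}$ is convex and at least twice differentiable (applied componentwise), and $\phi_\varepsilon(\alpha,\beta)=\alpha+\beta-\tilde\phi_\varepsilon(\alpha-\beta)$ is a smooth NCP function continuous in $\varepsilon$, where at $\varepsilon=0$ it is the nonsmooth NCP function, i.e. $\tilde\phi_0(t)=|t|$ and $(t,\varepsilon)\mapsto\tilde\phi_\varepsilon(t)$ is continuous on $\mathbb{R}\times[0,\infty)$ (example: $\tilde\phi_\varepsilon(t)=\sqrt{t^2+4\varepsilon^2}$). NEP($\varepsilon$), $\varepsilon>0$: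 player $\nu$ solves $\min_{x_\nu\in X_\nu}\theta^\varepsilon_\nu(x)=\tfrac12 x_\nu^\top Q_\nu x_\nu+c_\nu^\top x_\nu+\tfrac12\sum_i a_i[(L^\top+Q_y^{-1}B^\top)x+\tilde\phi_\varepsilon((L^\top-Q_y^{-1}B^\top)x)]_i$; it has a unique Nash equilibrium $x^*(\varepsilon)$. Nonsmooth NEP: player $\nu$ solves $\min_{x_\nu\in X_\nu}\theta_\nu(x)=\tfrac12 x_\nu^\top Q_\nu x_\nu+c_\nu^\top x_\nu+\sum_i a_i\max\{(Q_y^{-1}B^\top x)_i,(L^\top x)_i\}$. It is equivalent to the multi-leader-follower game in which, given $x$, the follower solves $\min_y\tfrac12 y^\top Q_y y-(B^\top x)^\top y$ s.t. $y\ge L^\top x$ (unique solution $y(x)=\max\{Q_y^{-1}B^\top x,L^\top x\}$) and leader $\nu$ minimizes $\tfrac12 x_\nu^\top Q_\nu x_\nu+c_\nu^\top x_\nu+a^\top y(x)$ over $X_\nu$. A Nash equilibrium is $x^*\in X$ such that each $x^*_\nu$ minimizes player $\nu$'s objective over $X_\nu$ with $x_{-\nu}=x^*_{-\nu}$. *)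

From HB Require Import structures.
From mathcomp Require Import all_boot all_order all_algebra.
From mathcomp Require Import all_classical all_reals all_analysis.
Set Implicit Arguments. Unset Strict Implicit. Unset Printing Implicit Defensive.
Import Order.TTheory GRing.Theory Num.Theory.
Import numFieldNormedType.Exports.
Local Open Scope classical_set_scope.
Local Open Scope ring_scope.

Section NashDefs.
Variable R : realType.

Definition sc (A : 'M[R]_1) : R := A ord0 ord0.

Definition qform k (Q : 'M[R]_k) (v : 'cV[R]_k) : R := sc (v^T *m Q *m v).

Definition sym_posdef k (Q : 'M[R]_k) : Prop :=
  Q^T = Q /\ forall v : 'cV[R]_k, v != 0 -> 0 < qform Q v.

Definition posdef_diag k (Q : 'M[R]_k) : Prop :=
  is_diag_mx Q /\ forall v : 'cV[R]_k, v != 0 -> 0 < qform Q v.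

Definition convex_fun k p (g : 'cV[R]_k -> 'cV[R]_p) : Prop :=
  forall (u v : 'cV[R]_k) (t : R), 0 <= t <= 1 ->
    forall j, g (t *: u + (1 - t) *: v) j ord0
              <= t * g u j ord0 + (1 - t) * g v j ord0.

Definition convex_fun1 (f : R -> R) : Prop :=
  forall u v t : R, 0 <= t <= 1 -> f (t * u + (1 - t) * v) <= t * f u + (1 - t) * f v.

Definition convex_setv k (S : set 'cV[R]_k) : Prop :=
  forall u v t, S u -> S v -> 0 <= t <= 1 -> S (t *: u + (1 - t) *: v).

Definition twice_diff (V W : normedModType R) (f : V -> W) : Prop :=
  (forall x, differentiable f x) /\
  (forall (v x : V), differentiable (fun y => derive f y v) x).

(* smoothing family: phit e t = \tilde\phi_e(t) *)
Definition smoothing_family (phit : R -> R -> R) : Prop :=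
  (forall e, 0 < e -> convex_fun1 (phit e) /\ @twice_diff R^o R^o (phit e)) /\
  (forall t, phit 0 t = `|t|) /\
  {within [set q : R * R | 0 <= q.2], continuous (fun q : R * R => phit q.2 q.1)}.

Variables (N : nat) (nv : 'I_N -> nat) (m : nat).

(* total dimension n = \sum_nu n_nu ; x = (x_1, ..., x_N) stacked *)
Definition ntot := (\sum_(nu < N) nv nu)%N.

Definition blk (x : 'cV[R]_ntot) (nu : 'I_N) : 'cV[R]_(nv nu) :=
  @submxcol R N nv 1 x nu.

Definition upd (x : 'cV[R]_ntot) (nu : 'I_N) (z : 'cV[R]_(nv nu)) : 'cV[R]_ntot :=
  @mxcol R N nv 1 (@dfwith _ (fun mu : 'I_N => 'M[R]_(nv mu, 1)) (fun mu => blk x mu) nu z).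

Unset Implicit Arguments.
Variables (Q : forall nu : 'I_N, 'M[R]_(nv nu)) (c : forall nu : 'I_N, 'cV[R]_(nv nu))
  (Xs : forall nu : 'I_N, set 'cV[R]_(nv nu))
  (a : 'cV[R]_m) (Qy : 'M[R]_m) (B L : 'M[R]_(ntot, m)).
Set Implicit Arguments.

Definition inX (x : 'cV[R]_ntot) : Prop := forall nu : 'I_N, Xs nu (blk x nu).

Definition own_cost (nu : 'I_N) (x : 'cV[R]_ntot) : R :=
  qform (Q nu) (blk x nu) / 2 + sc ((c nu)^T *m blk x nu).

Definition theta_eps (phit : R -> R -> R) (eps : R) (nu : 'I_N) (x : 'cV[R]_ntot) : R :=
  own_cost nu x + (\sum_(i < m) a i ord0 *
     (((L^T + invmx Qy *m B^T) *m x) i ord0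
      + map_mx (phit eps) ((L^T - invmx Qy *m B^T) *m x) i ord0)) / 2.

Definition theta (nu : 'I_N) (x : 'cV[R]_ntot) : R :=
  own_cost nu x + \sum_(i < m) a i ord0 *
     Num.max ((invmx Qy *m B^T *m x) i ord0) ((L^T *m x) i ord0).

Definition NashEq (obj : 'I_N -> 'cV[R]_ntot -> R) (x : 'cV[R]_ntot) : Prop :=
  inX x /\ forall (nu : 'I_N) (z : 'cV[R]_(nv nu)), Xs nu z -> obj nu x <= obj nu (upd x z).

Definition follower_feas (x : 'cV[R]_ntot) (y : 'cV[R]_m) : Prop :=
  forall i, (L^T *m x) i ord0 <= y i ord0.

Definition follower_obj (x : 'cV[R]_ntot) (y : 'cV[R]_m) : R :=
  qform Qy y / 2 - sc ((B^T *m x)^T *m y).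

Definition follower_sol (x : 'cV[R]_ntot) (y : 'cV[R]_m) : Prop :=
  follower_feas x y /\
  forall y', follower_feas x y' -> follower_obj x y <= follower_obj x y'.

Definition leader_obj (nu : 'I_N) (x : 'cV[R]_ntot) (y : 'cV[R]_m) : R :=
  own_cost nu x + sc (a^T *m y).

(* Nash equilibrium of the multi-leader-follower game: the follower response
   (any, in fact the unique, solution of the follower's problem) is plugged in *)
Definition MLF_NashEq (x : 'cV[R]_ntot) : Prop :=
  inX x /\ forall (nu : 'I_N) (z : 'cV[R]_(nv nu)), Xs nu z ->
    forall y y', follower_sol x y -> follower_sol (upd x z) y' ->
      leader_obj nu x y <= leader_obj nu (upd x z) y'.

End NashDefs.

From HB Require Import structures.
From mathcomp Require Import all_boot all_order all_algebra.
From mathcomp Require Import all_classical all_reals all_analysis.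
From mathcomp Require Import ring.
Set Implicit Arguments.
Unset Strict Implicit.
Unset Printing Implicit Defensive.
Import Order.TTheory GRing.Theory Num.Theory.
Import numFieldNormedType.Exports.
Local Open Scope classical_set_scope.
Local Open Scope ring_scope.

(* The smoothed objectives theta_eps are jointly continuous in (x, eps) on
   eps >= 0 and coincide with theta at eps = 0, because
   (u + w + |u - w|) / 2 = max u w.  The constraints x_nu \in X_nu and the
   equilibrium inequalities of NEP(eps_k) are closed conditions on
   (x_k, eps_k), so they pass to the cluster point (xbar, 0).  For the
   leader-follower game, Q_y is diagonal, so the follower's problem splits
   into one-dimensional problems min_{y_i >= l_i} (Q_y)_ii y_i^2 / 2 - b_i y_i
   whose solution is max (b_i / (Q_y)_ii) l_i; plugging it in turns each
   leader's cost into theta_nu. *)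

Section MatrixContinuity.
Variables (R : realType) (T : topologicalType).

Lemma continuous_mxP m n (f : T -> 'M[R]_(m, n)) :
  continuous f <-> forall i j, continuous (fun t => f t i j).
Proof.
split=> [fc i j t | fc t A [P /= Pn sPA]].
  exact: continuous_comp (fc t) (@coord_continuous _ _ _ i j (f t)).
have : \forall s \near t, forall i j, P i j (f s i j).
  by apply: filter_forall => i; apply: filter_forall => j; exact: fc i j t _ (Pn i j).
by apply: filterS => s Ps; exact: sPA.
Qed.

Lemma continuous_sum k (F : 'I_k -> T -> R) :
  (forall i, continuous (F i)) -> continuous (fun t => \sum_(i < k) F i t).
Proof.
move=> Fc t; apply: cvg_big => // [|i _]; [exact: add_continuous | exact: Fc].
Qed.

Lemma continuous_trmx m n (f : T -> 'M[R]_(m, n)) :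
  continuous f -> continuous (fun t => (f t)^T).
Proof.
move=> /continuous_mxP fc; apply/continuous_mxP => i j.
by under eq_fun do rewrite mxE; exact: fc.
Qed.

Lemma continuous_mulmx m n l (f : T -> 'M[R]_(m, n)) (g : T -> 'M[R]_(n, l)) :
  continuous f -> continuous g -> continuous (fun t => f t *m g t).
Proof.
move=> /continuous_mxP fc /continuous_mxP gc; apply/continuous_mxP => i j.
under eq_fun do rewrite mxE.
by apply: continuous_sum => k t; apply: cvgM; [exact: fc | exact: gc].
Qed.

Lemma continuous_blk N (nv : 'I_N -> nat) (f : T -> 'cV[R]_(ntot nv)) nu :
  continuous f -> continuous (fun t => blk (f t) nu).
Proof.
move=> /continuous_mxP fc; apply/continuous_mxP => i j.
by under eq_fun do rewrite mxE; exact: fc.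
Qed.

Lemma continuous_upd N (nv : 'I_N -> nat) (f : T -> 'cV[R]_(ntot nv)) nu
    (z : 'cV[R]_(nv nu)) :
  continuous f -> continuous (fun t => upd (f t) z).
Proof.
move=> fc; apply/continuous_mxP => i j.
have -> : (fun t => upd (f t) z i j) = (fun t => @dfwith _
    (fun mu => 'M[R]_(nv mu, 1)) (fun mu => blk (f t) mu) nu z
    (tagnat.sig1 i) (tagnat.sig2 i) j).
  by apply/funext => t; rewrite mxE.
rewrite /dfwith; case: (nu =P tagnat.sig1 i) => [e | ne]; first exact: cst_continuous.
by move/continuous_blk/continuous_mxP: fc; apply.
Qed.

Lemma continuous_within_comp (U W : topologicalType) (S : set U) (phi : U -> W)
    (h : T -> U) :
  {within S, continuous phi} -> (forall t, S (h t)) -> continuous h ->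
  continuous (fun t => phi (h t)).
Proof.
move=> /subspace_continuousP phic hS hc t A nA.
have := hc t _ (phic _ (hS t) A nA).
by rewrite !nbhs_simpl /=; apply: filterS => s /= Ss; apply: Ss; exact: hS.
Qed.

End MatrixContinuity.

Section ClusterPoints.
Variables (U : topologicalType) (u : nat -> U) (x : U).
Hypothesis x_cluster : cluster (u @ \oo) x.

Lemma cluster_pair_cvg (V : topologicalType) (v : nat -> V) l :
  v @ \oo --> l -> cluster ((fun k => (u k, v k)) @ \oo) (x, l).
Proof.
move=> v_l A B A_ev [[P1 P2] /= [P1x P2l] sPB].
pose K := [set k | A (u k, v k) /\ P2 (v k)].
have K_ev : \forall k \near \oo, (u @` K) (u k).
  near=> k; exists k => //; split; near: k; [exact: A_ev | exact: v_l].
have [_ [[k [Ak P2k] <-] P1k]] := x_cluster K_ev P1x.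
by exists (u k, v k); split=> //; exact: sPB.
Unshelve. all: by end_near.
Qed.

Lemma cluster_comp (W : topologicalType) (f : U -> W) :
  {for x, continuous f} -> cluster ((fun k => f (u k)) @ \oo) (f x).
Proof.
move=> fc A B A_ev fB.
by have [y [Ay By]] := @x_cluster (f @^-1` A) _ A_ev (fc B fB); exists (f y).
Qed.

Lemma closed_cluster (C : set U) : closed C -> (forall k, C (u k)) -> C x.
Proof.
move=> C_closed Cu; apply: C_closed => B xB.
have C_ev : \forall k \near \oo, C (u k) by exact: nearW.
exact: x_cluster C_ev xB.
Qed.

End ClusterPoints.

Section SmoothedObjectives.
Variables (R : realType) (N : nat) (nv : 'I_N -> nat) (m : nat).
Variables (Q : forall nu : 'I_N, 'M[R]_(nv nu)) (c : forall nu : 'I_N, 'cV[R]_(nv nu)).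
Variables (a : 'cV[R]_m) (Qy : 'M[R]_m) (B L : 'M[R]_(ntot nv, m)) (phit : R -> R -> R).
Hypothesis phit_smoothing : smoothing_family phit.

Local Notation theta_e := (theta_eps Q c a Qy B L phit).

Lemma theta_eps0 nu x : theta_e 0 nu x = theta Q c a Qy B L nu x.
Proof.
have [_ [phit0 _]] := phit_smoothing.
rewrite /theta_eps /theta mulr_suml; congr (_ + _); apply: eq_bigr => i _.
rewrite mulmxDl mulmxBl [map_mx _ _ _ _]mxE phit0 -mulrA maxC maxr_absE.
by set lx := L^T *m x; set wx := invmx Qy *m B^T *m x; rewrite !mxE.
Qed.

Lemma continuous_theta_eps (T : topologicalType) (X : T -> 'cV[R]_(ntot nv))
    (E : T -> R) nu :
  continuous X -> continuous E -> (forall t, 0 <= E t) ->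
  continuous (fun t => theta_e (E t) nu (X t)).
Proof.
move=> Xc Ec E_ge0; have [_ [_ phit_cont]] := phit_smoothing.
have entry k l (M : T -> 'M[R]_(k, l)) i j : continuous M -> continuous (fun t => M t i j).
  by move/continuous_mxP; apply.
have lin_entry k (M : 'M[R]_(k, ntot nv)) i : continuous (fun t => (M *m X t) i ord0).
  by apply: entry; apply: continuous_mulmx Xc; exact: cst_continuous.
have Xc_nu : continuous (fun t => blk (X t) nu) := continuous_blk Xc.
have quad_c : continuous (fun t => ((blk (X t) nu)^T *m Q nu *m blk (X t) nu) ord0 ord0).
  apply: entry; apply: continuous_mulmx (Xc_nu).
  by apply: continuous_mulmx (continuous_trmx Xc_nu) _; exact: cst_continuous.
have own_c : continuous (fun t => ((c nu)^T *m blk (X t) nu) ord0 ord0).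
  by apply: entry; apply: continuous_mulmx (Xc_nu); exact: cst_continuous.
have smooth_c (M : 'M[R]_(m, ntot nv)) i :
    continuous (fun t => map_mx (phit (E t)) (M *m X t) i ord0).
  under eq_fun do rewrite mxE.
  apply: (continuous_within_comp (h := fun t => ((M *m X t) i ord0, E t)) phit_cont).
    by move=> t; exact: E_ge0.
  move=> t.
  apply: (@cvg_pair _ _ _ _ (nbhs ((M *m X t) i ord0)) (nbhs (E t))).
  - exact: lin_entry.
  - exact: Ec.
move=> t; apply: cvgD; [apply: cvgD; [apply: cvgM | ] | apply: cvgM]; try exact: cvg_cst.
- exact: quad_c.
- exact: own_c.
apply: continuous_sum t => i t; apply: cvgM; first exact: cvg_cst.
by apply: cvgD; [exact: lin_entry | exact: smooth_c].
Qed.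

Lemma NashEq_theta_cluster (Xs : forall nu, set 'cV[R]_(nv nu))
    (eps : nat -> R) (xk : nat -> 'cV[R]_(ntot nv)) xbar :
  (forall nu, closed (Xs nu)) -> (forall k, 0 < eps k) -> eps @ \oo --> 0 ->
  (forall k, NashEq Xs (theta_e (eps k)) (xk k)) -> cluster (xk @ \oo) xbar ->
  NashEq Xs (theta Q c a Qy B L) xbar.
Proof.
move=> Xs_closed eps_gt0 eps_0 xk_eq xbar_cl; split=> [nu | nu z Xs_z].
  have blk_c : continuous (fun x : 'cV[R]_(ntot nv) => blk x nu).
    exact: continuous_blk (fun x => cvg_id).
  apply: (closed_cluster (cluster_comp xbar_cl (blk_c xbar)) (Xs_closed nu)) => k.
  exact: (xk_eq k).1 nu.
(* |eps| instead of eps: phit is only continuous on eps >= 0. *)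
pose gain (q : 'cV[R]_(ntot nv) * R) :=
  theta_e `|q.2| nu (upd q.1 z) - theta_e `|q.2| nu q.1.
have gain_c : continuous gain.
  have fst_c : continuous (fun q : 'cV[R]_(ntot nv) * R => q.1).
    by move=> q; exact: cvg_fst.
  have abs_c : continuous (fun q : 'cV[R]_(ntot nv) * R => `|q.2|).
    by move=> q; apply: continuous_comp cvg_snd _; exact: norm_continuous.
  have upd_c : continuous (fun q : 'cV[R]_(ntot nv) * R => upd q.1 z) := continuous_upd fst_c.
  move=> q; apply: cvgB.
  - exact: continuous_theta_eps upd_c abs_c (fun=> normr_ge0 _) q.
  - exact: continuous_theta_eps fst_c abs_c (fun=> normr_ge0 _) q.
have := closed_cluster (cluster_comp (cluster_pair_cvg xbar_cl eps_0) (gain_c _))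
  (@closed_ge R 0).
rewrite /gain /= normr0 !theta_eps0 subr_ge0; apply=> k.
by rewrite gtr0_norm // subr_ge0; exact: (xk_eq k).2.
Qed.

End SmoothedObjectives.

Lemma quad_gap_max (R : realFieldType) (d w l y : R) : 0 < d -> l <= y ->
  d / 2 * (y - Num.max w l) ^+ 2 <=
  (d * y ^+ 2 / 2 - d * w * y) - (d * Num.max w l ^+ 2 / 2 - d * w * Num.max w l).
Proof.
move=> d_gt0 ly; set s := Num.max w l.
have s_opt : 0 <= (y - s) * (s - w).
  by rewrite /s; case: (leP w l) => wl; rewrite ?subrr ?mulr0 // mulr_ge0 ?subr_ge0.
have -> : (d * y ^+ 2 / 2 - d * w * y) - (d * s ^+ 2 / 2 - d * w * s)
    = d / 2 * (y - s) ^+ 2 + d * ((y - s) * (s - w)) by field.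
by rewrite lerDl mulr_ge0 // ltW.
Qed.

Section DiagonalFollower.
Variables (R : realType) (m : nat) (Qy : 'M[R]_m).

Lemma qform_diag (y : 'cV[R]_m) : is_diag_mx Qy ->
  qform Qy y = \sum_i Qy i i * y i ord0 ^+ 2.
Proof.
move=> /is_diag_mxP Qy_diag; rewrite /qform /sc mxE; apply: eq_bigr => k _.
rewrite mxE (bigD1 k) //= big1 ?addr0; first by rewrite mxE expr2; ring.
by move=> l lk; rewrite Qy_diag ?mulr0.
Qed.

Hypothesis Qy_pd : posdef_diag Qy.

Lemma posdef_diag_gt0 i : 0 < Qy i i.
Proof.
have [Qy_diag Qy_pos] := Qy_pd.
have e_neq0 : (delta_mx i ord0 : 'cV[R]_m) != 0.
  by apply/eqP => /matrixP /(_ i ord0); rewrite !mxE !eqxx; exact/eqP/oner_neq0.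
have := Qy_pos _ e_neq0; rewrite qform_diag // (bigD1 i) //= big1 ?addr0.
  by rewrite mxE !eqxx expr1n mulr1.
by move=> l li; rewrite mxE (negbTE li) expr0n mulr0.
Qed.

Lemma posdef_diag_unitmx : Qy \in unitmx.
Proof.
have -> : Qy = diag_mx (\row_i Qy i i).
  apply/matrixP => i j; rewrite !mxE; have [-> | ij] := eqVneq i j; first by rewrite mulr1n.
  by rewrite mulr0n; move/is_diag_mxP: Qy_pd.1; apply.
rewrite unitmxE det_diag unitfE; apply/prodf_neq0 => i _.
by rewrite mxE lt0r_neq0 // posdef_diag_gt0.
Qed.

Lemma posdef_diag_mulKmx_entry (b : 'cV[R]_m) i :
  Qy i i * (invmx Qy *m b) i ord0 = b i ord0.
Proof.
have := mulKVmx posdef_diag_unitmx b; move/matrixP/(_ i ord0).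
rewrite mxE (bigD1 i) //= big1 ?addr0 // => l li.
by move/is_diag_mxP: Qy_pd.1 => ->; rewrite ?mul0r // eq_sym.
Qed.

Variables (N : nat) (nv : 'I_N -> nat) (B L : 'M[R]_(ntot nv, m)).

Lemma follower_obj_diag x (y : 'cV[R]_m) : follower_obj Qy B x y =
  \sum_k (Qy k k * y k ord0 ^+ 2 / 2 - (B^T *m x) k ord0 * y k ord0).
Proof.
rewrite /follower_obj qform_diag ?Qy_pd.1 // mulr_suml sumrB /sc mxE; congr (_ - _).
by apply: eq_bigr => k _; rewrite mxE.
Qed.

Lemma follower_sol_max x y : follower_sol Qy B L x y ->
  forall i, y i ord0 = Num.max ((invmx Qy *m B^T *m x) i ord0) ((L^T *m x) i ord0).
Proof.
move=> [y_feas y_opt]; set w := invmx Qy *m B^T *m x; set l := L^T *m x.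
pose s : 'cV[R]_m := \col_i Num.max (w i ord0) (l i ord0).
pose gap k := (Qy k k * y k ord0 ^+ 2 / 2 - (B^T *m x) k ord0 * y k ord0)
  - (Qy k k * s k ord0 ^+ 2 / 2 - (B^T *m x) k ord0 * s k ord0).
have gap_ge k : Qy k k / 2 * (y k ord0 - s k ord0) ^+ 2 <= gap k.
  rewrite /gap -(posdef_diag_mulKmx_entry (B^T *m x) k) mulmxA -/w /s mxE.
  exact: quad_gap_max (posdef_diag_gt0 k) (y_feas k).
have gap_ge0 k : 0 <= gap k.
  by apply: le_trans (gap_ge k); rewrite mulr_ge0 ?sqr_ge0 ?divr_ge0 ?ltW ?posdef_diag_gt0.
have s_feas : follower_feas L x s.
  by move=> k; rewrite /s [X in _ <= X]mxE le_max lexx orbT.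
have gap_sum0 : \sum_k gap k = 0.
  apply/le_anti/andP; split; last by apply: sumr_ge0 => k _; exact: gap_ge0.
  by rewrite sumrB subr_le0 -!follower_obj_diag; exact: y_opt.
move=> i; have := gap_ge i; rewrite (psumr_eq0P (fun k _ => gap_ge0 k) gap_sum0) //.
rewrite pmulr_rle0 ?divr_gt0 ?posdef_diag_gt0 // => sq_le0.
have : (y i ord0 - s i ord0) ^+ 2 == 0 by rewrite eq_le sq_le0 sqr_ge0.
by rewrite sqrf_eq0 subr_eq0 mxE => /eqP.
Qed.

Variables (Q : forall nu : 'I_N, 'M[R]_(nv nu)) (c : forall nu : 'I_N, 'cV[R]_(nv nu)).
Variables (Xs : forall nu : 'I_N, set 'cV[R]_(nv nu)) (a : 'cV[R]_m).

Lemma leader_obj_follower nu x y : follower_sol Qy B L x y ->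
  leader_obj Q c a nu x y = theta Q c a Qy B L nu x.
Proof.
move=> y_sol; rewrite /leader_obj /theta /sc mxE; congr (_ + _).
by apply: eq_bigr => i _; rewrite mxE (follower_sol_max y_sol).
Qed.

Lemma MLF_NashEq_of_NashEq x :
  NashEq Xs (theta Q c a Qy B L) x -> MLF_NashEq Q c Xs a Qy B L x.
Proof.
move=> [x_in x_eq]; split=> // nu z Xs_z y y' y_sol y'_sol.
by rewrite !leader_obj_follower //; exact: x_eq.
Qed.

End DiagonalFollower.

Theorem mainTheorem8 (R : realType) (N : nat) (nv : 'I_N -> nat)
  (Q : forall nu : 'I_N, 'M[R]_(nv nu)) (c : forall nu : 'I_N, 'cV[R]_(nv nu))
  (p : 'I_N -> nat) (g : forall nu : 'I_N, 'cV[R]_(nv nu) -> 'cV[R]_(p nu))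
  (m : nat) (a : 'cV[R]_m) (Qy : 'M[R]_m) (B L : 'M[R]_(ntot nv, m))
  (phit : R -> R -> R)
  (eps : nat -> R) (xk : nat -> 'cV[R]_(ntot nv)) :
  (0 < N)%N ->
  (forall nu, sym_posdef (Q nu)) ->
  (forall nu, convex_fun (g nu) /\ twice_diff (g nu)) ->
  let Xs := fun nu : 'I_N => [set z : 'cV[R]_(nv nu) | forall j, g nu z j ord0 <= 0] in
  (forall nu, Xs nu !=set0 /\ convex_setv (Xs nu) /\ closed (Xs nu)) ->
  (forall i, 0 <= a i ord0) ->
  posdef_diag Qy ->
  smoothing_family phit ->
  (forall k, 0 < eps k) ->
  eps @ \oo --> 0 ->
  (forall k, NashEq Xs (theta_eps Q c a Qy B L phit (eps k)) (xk k) /\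
             forall x', NashEq Xs (theta_eps Q c a Qy B L phit (eps k)) x' -> x' = xk k) ->
  forall xbar, cluster (xk @ \oo) xbar ->
    NashEq Xs (theta Q c a Qy B L) xbar /\ MLF_NashEq Q c Xs a Qy B L xbar.
Proof.
move=> _ _ _ Xs Xs_prop _ Qy_pd phit_smoothing eps_gt0 eps_0 xk_eq xbar xbar_cl.
have xbar_eq : NashEq Xs (theta Q c a Qy B L) xbar.
  apply: (NashEq_theta_cluster phit_smoothing _ eps_gt0 eps_0 _ xbar_cl).
  - by move=> nu; exact: (Xs_prop nu).2.2.
  - by move=> k; exact: (xk_eq k).1.
by split; last exact: MLF_NashEq_of_NashEq.
Qed.
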